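(* Let $\Omega\subset\mathbb{R}^d$ be a bounded open set, $\mathcal{O}\subset\mathbb{R}^d$ a nonempty open set and $\mathfrak{B}\in W^{1,\infty}(\mathbb{R}^d)^d$ (independent of time). Assume that for every $x_0\in\overline{\Omega}$ there exists $t\in(-\infty,0)$ with $\Phi(t,0,x_0)\in\mathcal{O}$. Then there exist $T_0>0$ and $r_0>0$ such that, for all $T>T_0$, $(T,T_0,r_0,\mathfrak{B},\Omega)$ satisfies the flushing condition for $\mathcal{O}$.
   Context: $\Phi(t,t_0,x_0)$ denotes the solution of $\frac{d}{dt}\Phi(t,t_0,x_0)=\mathfrak{B}(\Phi(t,t_0,x_0))$, $\Phi(t_0,t_0,x_0)=x_0$. Given $T>0$, $T_0\in(0,T)$, $r_0>0$ and a nonempty open $\mathcal{O}\subset\mathbb{R}^d$, we say $(T,T_0,r_0,\mathfrak{B},\Omega)$ satisfies the flushing condition for $\mathcal{O}$ if: for all $x_0\in\overline{\Omega}$ and all $t_0\in[T_0,T]$ there exists $t\in(t_0-T_0,t_0)$ such that $\Phi(t,t_0,x)\in\mathcal{O}$ for all $x\in\overline{B}(x_0,r_0)$ (closed ball). *)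

From HB Require Import structures.
From mathcomp Require Import all_boot all_order all_algebra.
From mathcomp Require Import all_classical all_reals all_analysis.
Set Implicit Arguments. Unset Strict Implicit. Unset Printing Implicit Defensive.
Import Order.TTheory GRing.Theory Num.Theory.
Import numFieldNormedType.Exports.
Local Open Scope classical_set_scope.
Local Open Scope ring_scope.

Definition enorm (R : realType) (d : nat) (x : 'rV[R]_d) : R :=
  Num.sqrt (\sum_(i < d) (x ord0 i) ^+ 2).

Definition cball (R : realType) (d : nat) (x : 'rV[R]_d) (r : R) : set 'rV[R]_d :=
  [set y | enorm (y - x) <= r].

(* B in W^{1,oo}(R^d)^d : bounded and (globally) Lipschitz vector field. *)
Definition W1inf (R : realType) (d : nat) (B : 'rV[R]_d -> 'rV[R]_d) : Prop :=
  (exists M : R, forall x, enorm (B x) <= M) /\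
  (exists L : R, forall x y, enorm (B x - B y) <= L * enorm (x - y)).

Definition is_flow (R : realType) (d : nat) (B : 'rV[R]_d -> 'rV[R]_d)
  (Phi : R -> R -> 'rV[R]_d -> 'rV[R]_d) : Prop :=
  forall (t0 : R) (x0 : 'rV[R]_d),
    Phi t0 t0 x0 = x0 /\
    forall t : R, is_derive t 1 (fun s => Phi s t0 x0) (B (Phi t t0 x0)).

(* Flushing condition for O of (T, T0, r0, B, Omega), B entering through its flow Phi. *)
Definition flushing (R : realType) (d : nat) (T T0 r0 : R)
  (Phi : R -> R -> 'rV[R]_d -> 'rV[R]_d) (Omega O : set 'rV[R]_d) : Prop :=
  forall x0, closure Omega x0 ->
  forall t0, T0 <= t0 <= T ->
  exists t, t0 - T0 < t < t0 /\ forall x, cball x0 r0 x -> O (Phi t t0 x).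

(* Since B is K-Lipschitz, Gronwall's inequality for |f - g|^2 along two
   solutions f, g gives |Phi(t,0,y) - Phi(t,0,x)| <= e^(K|t|) |y - x|.  Hence
   solutions are unique, so the flow is autonomous, Phi(t,t0,x) = Phi(t-t0,0,x),
   and every Phi(t,0,.) is continuous.  A backward time t_x < 0 with
   Phi(t_x,0,x) in the open set O therefore works on a whole neighbourhood of x,
   and compactness of the closure of Omega makes both the radius of these
   neighbourhoods and |t_x| uniform: some N bounds |t_x| and 1/N is a common
   radius.  Then T0 = N and r0 = 1/N work, by translating time by t0. *)

From HB Require Import structures.
From mathcomp Require Import all_boot all_order all_algebra.
From mathcomp Require Import all_classical all_reals all_analysis.
From mathcomp Require Import ring lra.
Set Implicit Arguments. Unset Strict Implicit. Unset Printing Implicit Defensive.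
Import Order.TTheory GRing.Theory Num.Theory.
Import numFieldNormedType.Exports.
Local Open Scope classical_set_scope.
Local Open Scope ring_scope.

Section EuclideanNorm.
Variables (R : realType) (d : nat).
Implicit Types v : 'rV[R]_d.

Lemma enorm_ge0 v : 0 <= enorm v.
Proof. exact: sqrtr_ge0. Qed.

Lemma sqr_enorm v : enorm v ^+ 2 = \sum_(i < d) (v ord0 i) ^+ 2.
Proof. by rewrite sqr_sqrtr // sumr_ge0 // => i _; rewrite sqr_ge0. Qed.

Lemma entry_le_enorm v i : `|v ord0 i| <= enorm v.
Proof.
rewrite -ler_sqr ?nnegrE ?enorm_ge0 // sqr_enorm real_normK ?num_real //.
by rewrite (bigD1 i) //= lerDl sumr_ge0 // => j _; rewrite sqr_ge0.
Qed.

Lemma entry_le_normr v i : `|v ord0 i| <= `|v|.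
Proof.
by rewrite [leRHS]/Num.Def.normr/= mx_normrE (le_bigmax _ _ (ord0, i)).
Qed.

Lemma normr_le_enorm v : `|v| <= enorm v.
Proof.
rewrite [leLHS]/Num.Def.normr/= mx_normrE bigmax_le ?enorm_ge0 // => -[a j] _.
by rewrite (ord1 a) entry_le_enorm.
Qed.

Lemma enorm_le_normr v : enorm v <= Num.sqrt d%:R * `|v|.
Proof.
rewrite -ler_sqr ?nnegrE ?mulr_ge0 ?enorm_ge0 ?sqrtr_ge0 //.
rewrite sqr_enorm exprMn sqr_sqrtr ?ler0n // -[d in d%:R]card_ord -sumr_const.
rewrite mulr_suml ler_sum // => i _; rewrite mul1r -real_normK ?num_real //.
by rewrite lerXn2r ?nnegrE ?entry_le_normr.
Qed.

Lemma enorm0 : enorm (0 : 'rV[R]_d) = 0.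
Proof. by rewrite /enorm big1 ?sqrtr0 // => i _; rewrite mxE expr0n. Qed.

Lemma enorm_eq0 v : (enorm v == 0) = (v == 0).
Proof.
apply/eqP/eqP => [v0|->]; last exact: enorm0.
by apply/normr0_eq0/le_anti; rewrite normr_ge0 -v0 normr_le_enorm.
Qed.

End EuclideanNorm.

Section ScalarGronwall.
Variable R : realType.
Implicit Types (a b c s t x : R) (f df : R -> R).

Lemma is_derive_expR_scale c t :
  is_derive t 1 (fun s => expR (c * s)) (expR (c * t) * c).
Proof.
have lin : is_derive t 1 (fun s : R => c * s) c.
  by rewrite -[X in is_derive _ _ _ X]mulr1; exact: is_deriveZ.
exact: is_derive1_comp (is_derive_expR _) lin.
Qed.

Lemma is_derive_le0_nincr f df a b :
  (forall x, is_derive x 1 f (df x)) -> (forall x, df x <= 0) ->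
  a <= b -> f b <= f a.
Proof.
move=> fdf df_le0 ab.
have fcont : continuous f.
  by move=> x; apply/differentiable_continuous/derivable1_diffP; case: (fdf x).
rewrite -subr_le0.
have [c _ ->] : exists2 c, c \in `[a, b]%R & f b - f a = df c * (b - a).
  by apply: MVT_segment => //; exact: continuous_subspaceT.
by rewrite mulr_le0_ge0 // subr_ge0.
Qed.

Lemma gronwall_forward f df c a t :
  (forall s, is_derive s 1 f (df s)) -> (forall s, df s <= c * f s) ->
  a <= t -> f t <= expR (c * (t - a)) * f a.
Proof.
move=> fdf df_le le_at.
pose g s := expR (- c * s) * f s.
pose dg s := expR (- c * s) * (df s - c * f s).
have gdg s : is_derive s 1 g (dg s).
  rewrite (_ : g = (fun s => expR (- c * s)) * f) //.
  apply: is_derive_eq (is_deriveM (is_derive_expR_scale (- c) s) (fdf s)) _.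
  by rewrite /dg /GRing.scale /=; ring.
have g_ta : g t <= g a.
  apply: (is_derive_le0_nincr gdg) => // s.
  by rewrite /dg mulr_ge0_le0 ?expR_ge0 // subr_le0.
have -> : f t = expR (c * t) * g t.
  by rewrite /g mulrA -expRD mulNr addrN expR0 mul1r.
have -> : expR (c * (t - a)) * f a = expR (c * t) * g a.
  by rewrite /g mulrA -expRD; congr (expR _ * _); ring.
by rewrite ler_wpM2l ?expR_ge0.
Qed.

Lemma gronwall f df c a t :
  (forall s, is_derive s 1 f (df s)) -> (forall s, `|df s| <= c * f s) ->
  f t <= expR (c * `|t - a|) * f a.
Proof.
move=> fdf df_le; have [le_at|lt_ta] := leP a t.
  rewrite ger0_norm ?subr_ge0 //; apply: gronwall_forward le_at => // s.
  exact: le_trans (ler_norm _) (df_le s).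
(* Backwards in time, run the forward estimate for s |-> f (- s). *)
have fNdfN s : is_derive s 1 (f \o -%R) (- df (- s)).
  by rewrite -mulrN1; exact: is_derive1_comp.
have le_Na_Nt : - a <= - t by rewrite lerN2 ltW.
have := gronwall_forward fNdfN _ le_Na_Nt.
rewrite /= !opprK ltr0_norm ?subr_lt0 // opprB addrC; apply=> s /=.
by apply: le_trans (df_le _); rewrite -normrN ler_norm.
Qed.

End ScalarGronwall.

Lemma is_derive_comp_shift (R : realType) (V : normedModType R) (F : R -> V)
    (c t : R) (D : V) :
  is_derive (t + c) 1 F D -> is_derive t 1 (F \o shift c) D.
Proof.
case=> dF <-.
have E : (fun h : R => h^-1 *: ((F \o shift c \o shift t) (h *: 1) - (F \o shift c) t))
    = (fun h : R => h^-1 *: ((F \o shift (t + c)) (h *: 1) - F (t + c))).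
  by apply/funext => h /=; rewrite addrA.
by apply: DeriveDef; rewrite /derivable /derive E.
Qed.

Section SquaredEuclideanNorm.
Variables (R : realType) (d : nat).
Implicit Types (u : R -> 'rV[R]_d) (v w D : 'rV[R]_d).

Lemma is_derive_entry u (t : R) D i :
  is_derive t 1 u D -> is_derive t 1 (fun s => u s ord0 i) (D ord0 i).
Proof.
case=> du <-; apply: DeriveDef; first exact: (derivable_mxP u t 1).1 du ord0 i.
by rewrite derive_mx // mxE.
Qed.

Lemma is_derive_sqr_enorm u (t : R) D : is_derive t 1 u D ->
  is_derive t 1 (fun s => enorm (u s) ^+ 2)
    (2 * \sum_(i < d) u t ord0 i * D ord0 i).
Proof.
move=> uD.
rewrite (_ : (fun s => _) = \sum_(i < d) (fun s => u s ord0 i) ^+ 2); last first.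
  by apply/funext => s; rewrite sqr_enorm fct_sumE.
apply: is_derive_eq.
  by apply: is_derive_sum => i; exact/is_deriveX/is_derive_entry.
by rewrite mulr_sumr; apply: eq_bigr => i _; rewrite /GRing.scale /=; ring.
Qed.

Lemma abs_dot_le K v w : 0 < K -> enorm w <= K * enorm v ->
  `|\sum_(i < d) v ord0 i * w ord0 i| <= K * enorm v ^+ 2.
Proof.
move=> K0 wv.
have sum_w : \sum_(i < d) w ord0 i ^+ 2 <= K ^+ 2 * enorm v ^+ 2.
  by rewrite -sqr_enorm -exprMn lerXn2r ?nnegrE ?mulr_ge0 ?enorm_ge0 ?(ltW K0).
rewrite -(ler_pM2l K0); apply: le_trans (ler_wpM2l (ltW K0) (ler_norm_sum _ _ _)) _.
(* termwise AM-GM: K |v_i w_i| <= (K^2 v_i^2 + w_i^2) / 2 *)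
apply: (@le_trans _ _ (\sum_(i < d) (K ^+ 2 * v ord0 i ^+ 2 + w ord0 i ^+ 2) / 2)).
  rewrite mulr_sumr ler_sum // => i _.
  rewrite normrM -[v _ _ ^+ 2]real_normK ?num_real //.
  rewrite -[w _ _ ^+ 2]real_normK ?num_real //.
  have := sqr_ge0 (K * `|v ord0 i| - `|w ord0 i|); nra.
rewrite -mulr_suml big_split /= -mulr_sumr -sqr_enorm; lra.
Qed.

End SquaredEuclideanNorm.

Lemma pos_lipschitz_constant (R : realType) (d : nat) (B : 'rV[R]_d -> 'rV[R]_d) L :
  (forall x y, enorm (B x - B y) <= L * enorm (x - y)) ->
  exists2 K, 0 < K & forall x y, enorm (B x - B y) <= K * enorm (x - y).
Proof.
move=> B_lip; exists (Num.max L 1); first by rewrite lt_max ltr01 orbT.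
move=> x y; apply: le_trans (B_lip x y) _.
by rewrite ler_wpM2r ?enorm_ge0 ?le_max ?lexx.
Qed.

Section LipschitzODE.
Variables (R : realType) (d : nat) (B : 'rV[R]_d -> 'rV[R]_d) (K : R).
Implicit Types a s t : R.
Hypothesis K_gt0 : 0 < K.
Hypothesis B_lip : forall x y, enorm (B x - B y) <= K * enorm (x - y).
Variables f g : R -> 'rV[R]_d.
Hypothesis f_sol : forall s, is_derive s 1 f (B (f s)).
Hypothesis g_sol : forall s, is_derive s 1 g (B (g s)).

Lemma enorm_sub_solutions_le a t :
  enorm (f t - g t) <= expR (K * `|t - a|) * enorm (f a - g a).
Proof.
pose phi s := enorm (f s - g s) ^+ 2.
pose dphi s := 2 * \sum_(i < d) (f s - g s) ord0 i * (B (f s) - B (g s)) ord0 i.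
have phi_derive s : is_derive s 1 phi (dphi s) by exact: is_derive_sqr_enorm.
have dphi_le s : `|dphi s| <= 2 * K * phi s.
  rewrite normrM ger0_norm // -mulrA ler_pM2l //.
  by apply: abs_dot_le; rewrite ?B_lip.
rewrite -ler_sqr ?nnegrE ?mulr_ge0 ?expR_ge0 ?enorm_ge0 // exprMn -expRM_natl.
by rewrite mulrA; exact: gronwall phi_derive dphi_le.
Qed.

Lemma solutions_eq a : f a = g a -> forall t, f t = g t.
Proof.
move=> fga t; apply/eqP; rewrite -subr_eq0 -enorm_eq0 eq_le enorm_ge0 andbT.
by rewrite (le_trans (enorm_sub_solutions_le a t)) // fga subrr enorm0 mulr0.
Qed.

End LipschitzODE.

Section Flow.
Variables (R : realType) (d : nat) (B : 'rV[R]_d -> 'rV[R]_d) (K : R).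
Variable Phi : R -> R -> 'rV[R]_d -> 'rV[R]_d.
Implicit Types (s t : R) (x y : 'rV[R]_d).
Hypothesis K_gt0 : 0 < K.
Hypothesis B_lip : forall x y, enorm (B x - B y) <= K * enorm (x - y).
Hypothesis Phi_flow : is_flow B Phi.

Lemma flow_autonomous t (t0 : R) x : Phi t t0 x = Phi (t - t0) 0 x.
Proof.
have [Phi_t0 Phi_sol] := Phi_flow t0 x; have [Phi_0 Phi0_sol] := Phi_flow 0 x.
have shifted_sol s :
    is_derive s 1 ((fun s => Phi s 0 x) \o shift (- t0)) (B (Phi (s - t0) 0 x)).
  exact: is_derive_comp_shift.
apply: (solutions_eq K_gt0 B_lip Phi_sol shifted_sol (a := t0)).
by rewrite /= subrr Phi_t0 Phi_0.
Qed.

Lemma enorm_flow_sub_le t x y :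
  enorm (Phi t 0 y - Phi t 0 x) <= expR (K * `|t|) * enorm (y - x).
Proof.
have [Phi0y Phi_y] := Phi_flow 0 y; have [Phi0x Phi_x] := Phi_flow 0 x.
have := enorm_sub_solutions_le K_gt0 B_lip Phi_y Phi_x 0 t.
by rewrite subr0 Phi0y Phi0x.
Qed.

Lemma flow_continuous t : continuous (Phi t 0).
Proof.
move=> x; pose c := expR (K * `|t|) * (Num.sqrt d%:R + 1).
have c_gt0 : 0 < c by rewrite mulr_gt0 ?expR_gt0 // ltr_wpDl ?sqrtr_ge0.
apply/(cvgrPdist_lt (F := nbhs x)) => e e_gt0.
have xe : 0 < e / c by rewrite divr_gt0.
move: (nbhsx_ballx x _ xe); apply: filterS => y; rewrite -ball_normE /= => xy.
apply: le_lt_trans (normr_le_enorm _) _.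
apply: le_lt_trans (enorm_flow_sub_le _ _ _) _.
apply: le_lt_trans (ler_wpM2l (expR_ge0 _) (enorm_le_normr _)) _.
apply: (@le_lt_trans _ _ (c * `|x - y|)).
  by rewrite /c -mulrA ler_wpM2l ?expR_ge0 // ler_wpM2r ?lerDl.
by rewrite -ltr_pdivlMl // mulrC.
Qed.

End Flow.

Lemma bounded_closure (R : realFieldType) (V : normedModType R) (A : set V) :
  bounded_set A -> bounded_set (closure A).
Proof.
move=> [M [M_real AM]]; exists M; split => // N MN.
have A_ball : A `<=` closed_ball_ Num.norm (0 : V) N.
  by move=> x Ax; rewrite /closed_ball_ /= sub0r normrN; exact: AM.
move=> x /(closureS A_ball) /closed_closed_ball_.
by rewrite /closed_ball_ /= sub0r normrN.
Qed.

Lemma uniform_hitting_time (R : realType) (V : normedModType R)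
    (T : topologicalType) (phi : R -> V -> T) (C : set V) (O : set T) :
  (forall t, continuous (phi t)) -> compact C -> open O ->
  (forall x, C x -> exists t, t < 0 /\ O (phi t x)) ->
  exists2 N, 0 < N & forall x, C x ->
    exists t, - N < t < 0 /\ forall y, `|y - x| <= N^-1 -> O (phi t y).
Proof.
move=> phi_cont cC oO hit.
pose P N x := exists t, - N < t < 0 /\ forall y, `|y - x| <= N^-1 -> O (phi t y).
have : \forall N \near +oo, C `<=` P N.
  apply: ((compact_near_coveringP C).1 cC R (pinfty_nbhs R) P).
  move=> x /hit [t [t_lt0 Ot]].
  have /nbhs_normP [e /= e_gt0 eO] : \forall y \near x, O (phi t y).
    exact: phi_cont t x O (open_nbhs_nbhs (conj oO Ot)).
  near=> x' N.
  have Nt : - t < N by near: N; apply: nbhs_pinfty_gt; exact: num_real.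
  have Ne : (e / 2)^-1 < N by near: N; apply: nbhs_pinfty_gt; exact: num_real.
  have x'x : `|x - x'| < e / 2.
    by near: x'; apply/nbhs_normP; exists (e / 2) => /=; rewrite ?divr_gt0.
  exists t => /=; split; first by rewrite t_lt0 andbT ltrNl.
  move=> y yx'; apply: eO => /=.
  apply: le_lt_trans (ler_distD x' x y) _; rewrite (splitr e) ltrD // distrC.
  have N_gt0 : 0 < N by apply: lt_trans Ne; rewrite invr_gt0 divr_gt0.
  by rewrite (le_lt_trans yx') // invf_plt ?posrE ?divr_gt0.
move=> CP; near +oo_R => N; exists N; last by near: N.
by near: N; apply: nbhs_pinfty_gt; exact: num_real.
Unshelve. all: by end_near.
Qed.

Theorem proposition2p1 (R : realType) (d : nat)
  (Omega O : set 'rV[R]_d) (B : 'rV[R]_d -> 'rV[R]_d)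
  (Phi : R -> R -> 'rV[R]_d -> 'rV[R]_d) :
  open Omega -> bounded_set Omega ->
  open O -> O !=set0 ->
  W1inf B -> is_flow B Phi ->
  (forall x0, closure Omega x0 -> exists t : R, t < 0 /\ O (Phi t 0 x0)) ->
  exists T0 : R, exists r0 : R, 0 < T0 /\ 0 < r0 /\
    forall T : R, T0 < T -> flushing T T0 r0 Phi Omega O.
Proof.
move=> _ Omega_bounded O_open _ [_ [L B_lip]] Phi_flow hit.
have [K K_gt0 B_Klip] := pos_lipschitz_constant B_lip.
have Phi_cont := flow_continuous K_gt0 B_Klip Phi_flow.
have cl_compact : compact (closure Omega).
  exact: bounded_closed_compact (bounded_closure Omega_bounded) (@closed_closure _ _).
have [N N_gt0 hitN] := uniform_hitting_time Phi_cont cl_compact O_open hit.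
exists N, N^-1; split => //; split => [|T _ x0 x0_cl t0 _]; first by rewrite invr_gt0.
have [t [/andP [Nt t_lt0] Ot]] := hitN x0 x0_cl.
exists (t0 + t); split; first by apply/andP; split; lra.
move=> y /(le_trans (normr_le_enorm _)) yx0.
by rewrite (flow_autonomous K_gt0 B_Klip Phi_flow) (addrC t0) addrK; exact: Ot.
Qed.
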